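(* Let $S\in\{0,1\}$ be an endogenous binary selection indicator (with $S=1$ meaning the unit is included and its label $Y$ observed), let $Z\subseteq V$ be a set of endogenous variables, and let $(d,\theta)$, $(d',\theta')$ be values of the inputs. Suppose $Y\perp\!\!\!\perp\{D,\Theta,S\}\mid X,Z$ and $\mathbb{P}(X,Z\mid\mathrm{do}(D=d,\Theta=\theta))\ll\mathbb{P}(X,Z\mid S=1,\mathrm{do}(D=d',\Theta=\theta'))$. Then $\mathbb{E}[Y\mid X,\mathrm{do}(D=d,\Theta=\theta)]$ is identifiable in $\mathcal{M}$ from $\{\mathbb{P}(X,Y,Z\mid S=1,\mathrm{do}(D=d',\Theta=\theta')),\ \mathbb{P}(X,Z\mid\mathrm{do}(D=d,\Theta=\theta))\}$, and $$\mathbb{E}[Y\mid X,\mathrm{do}(D=d,\Theta=\theta)]=\mathbb{E}\big[\mathbb{E}[Y\mid X,Z,S=1]\,\big|\,X,\mathrm{do}(D=d,\Theta=\theta)\big]$$ holds $\mathbb{P}(X\mid\mathrm{do}(D=d,\Theta=\theta))$-almost everywhere.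
   Context: Setting: all variables take values in subsets of Euclidean spaces with Borel $\sigma$-algebras. Variables: features $X$, target $Y$ (real-valued), prediction $\hat{Y}$, and two input (non-random, externally set) variables: a domain indicator $D\in\{0,1\}$ (deployment of a decision support system) and parameters $\Theta$. A structural causal model (SCM) with input variables $\{D,\Theta\}$ induces, for every value $(d,\theta)$, a distribution $\mathbb{P}(\cdot\mid\mathrm{do}(D=d,\Theta=\theta))$ on the endogenous variables (push-forward of independent exogenous distributions through the structural equations). The class $\mathcal{M}$: the set of SCMs with endogenous variables $V\supseteq\{X,\hat{Y},Y\}$, input variables $\{D,\Theta\}$, and graph $G$ such that the parents of $\hat{Y}$ are exactly $\{X,\Theta\}$, the children of $D$ equal the children of $\hat{Y}$, and the latent projection of $G$ onto $\{X,\hat{Y},Y,D,\Theta\}$ is a subgraph of the acyclic directed mixed graph with edges $X\to\hat{Y}$, $\Theta\to\hat{Y}$, $X\to Y$, $\hat{Y}\to Y$, $D\to Y$, $X\leftrightarrow Y$. Identifiability: a target quantity $t(M)$ is identifiable in $\mathcal{M}$ from a set $s(M)$ of distributions induced by $M$ if $s(M_1)=s(M_2)\implies t(M_1)=t(M_2)$ for all $M_1,M_2\in\mathcal{M}$. The conditional independence $Y\perp\!\!\!\perp\{D,\Theta,S\}\mid X,Z$ is meant in the transitional sense (implied by d-separation in the graph). $\ll$ denotes absolute continuity. *)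

From HB Require Import structures.
From mathcomp Require Import all_boot all_order all_algebra.
From mathcomp Require Import all_classical all_reals all_analysis.

Unset Strict Implicit.
Unset Printing Implicit Defensive.

Import Order.TTheory GRing.Theory Num.Theory.
Local Open Scope classical_set_scope.
Local Open Scope ring_scope.

(* Euclidean encoding.  The endogenous variables of an SCM are indexed by a  *)
(* finite type V; the joint state of all endogenous variables is a point of  *)
(* R^N (an N.-tuple), each coordinate i : 'I_N belonging to the variable     *)
(* own i.  The value of a set A of variables is represented by the tuple in  *)
(* which all coordinates not belonging to A are set to 0 (this is a          *)
(* measurable embedding of the product of the value spaces of A into R^N).   *)

Definition coord_restr (R : realType) (I : finType) (n : nat) (own : 'I_n -> I)
  (A : {set I}) (x : n.-tuple R) : n.-tuple R :=
  [tuple if own i \in A then tnth x i else 0 | i < n].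

Definition zero_tuple (R : realType) (n : nat) : n.-tuple R :=
  [tuple (0 : R) | i < n].

(* Acyclic SCMs with input variables D (domain indicator, in {0,1} = bool)   *)
(* and Theta (parameters, in R^p).  Exogenous variables are indexed by a     *)
(* finite type [exo]; jointly they live in R^nE, coordinate k belonging to   *)
(* exogenous variable ownE k, and are mutually independent under PE.        *)
(* The graph of the SCM: paV w v (w -> v), paD v (D -> v), paT v (Theta ->   *)
(* v), paE u v (exogenous u -> v).  Shared exogenous parents induce the      *)
(* bidirected edges of the (mixed) graph of the SCM.                         *)

Record SCM (R : realType) (V : finType) (N : nat) (own : 'I_N -> V)
    (p : nat) := {
  exo : finType;
  nE : nat;
  ownE : 'I_nE -> exo;
  PE : probability (nE.-tuple R) R;
  F : N.-tuple R -> bool -> p.-tuple R -> nE.-tuple R -> N.-tuple R;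
  paV : V -> V -> bool;
  paD : V -> bool;
  paT : V -> bool;
  paE : exo -> V -> bool;
  F_local : forall (i : 'I_N) x x' d d' th th' e e',
    (forall j, paV (own j) (own i) -> tnth x j = tnth x' j) ->
    (paD (own i) -> d = d') ->
    (paT (own i) -> th = th') ->
    (forall k, paE (ownE k) (own i) -> tnth e k = tnth e' k) ->
    tnth (F x d th e) i = tnth (F x' d' th' e') i;
  F_meas : forall d th,
    measurable_fun [set: N.-tuple R * nE.-tuple R]
      (fun xe => F xe.1 d th xe.2);
  acyclic : exists rk : V -> nat, forall w v, paV w v -> (rk w < rk v)%N;
  exo_indep : forall A : exo -> set (nE.-tuple R),
    (forall u, measurable (A u)) ->
    PE (\bigcap_u (@coord_restr R exo nE ownE [set u] @^-1` A u)) =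
    (\prod_u PE (@coord_restr R exo nE ownE [set u] @^-1` A u))%E
}.


Arguments exo {R V N own p} _.
Arguments nE {R V N own p} _.
Arguments ownE {R V N own p} _ _.
Arguments PE {R V N own p} _.
Arguments F {R V N own p} _ _ _ _ _.
Arguments paV {R V N own p} _ _ _.
Arguments paD {R V N own p} _ _.
Arguments paT {R V N own p} _ _.
Arguments paE {R V N own p} _ _ _.

Section SCMdefs.
Context (R : realType) (V : finType) (N : nat) (own : 'I_N -> V) (p : nat).
Implicit Type M : @SCM R V N own p.

(* The (unique, by acyclicity) solution of the structural equations:        *)
(* #|V| rounds of substitution suffice since every directed chain of         *)
(* endogenous variables has at most #|V| nodes.                              *)
Definition scm_sol M (d : bool) (th : p.-tuple R) (e : (nE M).-tuple R) :
  N.-tuple R := iter #|V| (fun x => F M x d th e) (zero_tuple R N).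

Definition Pdo M (d : bool) (th : p.-tuple R) : set (N.-tuple R) -> \bar R :=
  pushforward (PE M) (scm_sol M d th).

Definition vals (A : {set V}) : N.-tuple R -> N.-tuple R := @coord_restr R V N own A.

(* scm_node: inl true = D, inl false = Theta, inr (inl v) = endogenous v,       *)
(*       inr (inr u) = exogenous (latent) u                                  *)
Definition scm_node M := (bool + (V + exo M))%type.

Definition gedge M : rel (scm_node M) := fun a b =>
  match a, b with
  | inl true, inr (inl v) => paD M v
  | inl false, inr (inl v) => paT M v
  | inr (inl w), inr (inl v) => paV M w v
  | inr (inr u), inr (inl v) => paE M u v
  | _, _ => false
  end.

(* Latent projection of the graph onto the scm_node set W: *)
Definition lp_dir M (W : seq (scm_node M)) (a b : scm_node M) : Prop :=
  exists s, path (gedge M) a (rcons s b) && all (fun c => c \notin W) s.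
(* a <-> b iff a path a <- ... <- c -> ... -> b with c and all intermediate *)
(* nodes outside W (i.e. all intermediate nodes latent non-colliders).      *)
Definition lp_bidir M (W : seq (scm_node M)) (a b : scm_node M) : Prop :=
  a != b /\ exists c, c \notin W /\ exists s1 s2,
    [&& path (gedge M) c (rcons s1 a), all (fun c => c \notin W) s1,
        path (gedge M) c (rcons s2 b) & all (fun c => c \notin W) s2].

Definition in_classM M (vX vYh vY : V) : Prop :=
  let nD : scm_node M := inl true in
  let nT : scm_node M := inl false in
  let nX : scm_node M := inr (inl vX) in
  let nYh : scm_node M := inr (inl vYh) in
  let nY : scm_node M := inr (inl vY) in
  let W := [:: nX; nYh; nY; nD; nT] in
  [/\ (forall w, paV M w vYh = (w == vX)) /\ ~~ paD M vYh /\ paT M vYh,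
      (forall v, paD M v = paV M vYh v),
      (forall a b, a \in W -> b \in W -> lp_dir M W a b ->
         (a, b) \in [:: (nX, nYh); (nT, nYh); (nX, nY); (nYh, nY); (nD, nY)])
    &
      (forall a b, a \in W -> b \in W -> lp_bidir M W a b ->
         ((a, b) == (nX, nY)) || ((a, b) == (nY, nX)))].

End SCMdefs.

Arguments scm_sol {R V N own p} M d th e.
Arguments Pdo {R V N own p} M d th.
Arguments vals {R V N} own A x.
Arguments scm_node {R V N own p} M.
Arguments gedge {R V N own p} M _ _.
Arguments lp_dir {R V N own p} M W a b.
Arguments lp_bidir {R V N own p} M W a b.
Arguments in_classM {R V N own p} M vX vYh vY.

Definition condP d (T : measurableType d) (R : realType)
  (P : set T -> \bar R) (C : set T) : set T -> \bar R :=
  fun A => (P (A `&` C) * ((fine (P C))^-1)%:E)%E.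

Definition is_condexp d1 d2 (T1 : measurableType d1) (T2 : measurableType d2)
  (R : realType) (mu : set T1 -> \bar R) (g : T1 -> T2) (Yf : T1 -> R)
  (h : T2 -> R) : Prop :=
  measurable_fun [set: T2] h /\
  forall B : set T2, measurable B ->
    (\int[mu]_(x in g @^-1` B) (Yf x)%:E =
     \int[mu]_(x in g @^-1` B) (h (g x))%:E)%E.

(* Transitional conditional independence  Yf _||_ {D, Theta} u Ind | Cond  *)
(* (Forré): there is a Markov kernel Q from (the value of) Cond to Yf such  *)
(* that for all input values (d, th),                                       *)
(*   P(Cond u Ind, Yf | do(d, th)) = P(Cond u Ind | do(d, th)) (x) Q.       *)
Definition trans_CI (R : realType) (V : finType) (N : nat) (own : 'I_N -> V)
  (p : nat) (M : @SCM R V N own p) (Yf : N.-tuple R -> R)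
  (Ind Cond : {set V}) : Prop :=
  exists Q : R.-pker (N.-tuple R) ~> R,
    forall d th (C : set (N.-tuple R)) (E : set R),
      measurable C -> measurable E ->
      Pdo M d th (vals own (Cond :|: Ind) @^-1` C `&` Yf @^-1` E) =
      (\int[Pdo M d th]_(x in vals own (Cond :|: Ind) @^-1` C)
          Q (vals own Cond x) E)%E.

Arguments coord_restr {R I n} own A x.
Arguments condP {d T R} P C.
Arguments is_condexp {d1 d2 T1 T2 R} mu g Yf h.
Arguments trans_CI {R V N own p} M Yf Ind Cond.

From HB Require Import structures.
From mathcomp Require Import all_boot all_order all_algebra.
From mathcomp Require Import all_classical all_reals all_analysis.
From mathcomp Require Import measurable_realfun.

Import Order.TTheory GRing.Theory Num.Theory.
Local Open Scope classical_set_scope.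
Local Open Scope ring_scope.

(* The conditional independence gives a kernel Q from (X, Z) to Y that
   disintegrates the joint law of (X, Z, S, Y) under every intervention.
   Hence the mean m of Q is a version of E[Y | X, Z] both under S = 1 in the
   source domain and under do(D = d, Theta = th); by absolute continuity any
   version h of E[Y | X, Z, S = 1] agrees with m almost everywhere for the
   law of (X, Z) under do(d, th), so h(X, Z) is a version of
   E[Y | X, Z, do(d, th)] and the tower property yields the formula.
   Identifiability follows because h and the law of (X, Z) under do(d, th)
   are read off the two given distributions. *)

Section coord_restr.
Context (R : realType) (I : finType) (n : nat) (own : 'I_n -> I).
Local Notation restr A := (@coord_restr R I n own A).

Lemma measurable_coord_restr (A : {set I}) :
  measurable_fun [set: n.-tuple R] (coord_restr own A).
Proof.
apply/measurable_fun_tnthP => i /=; rewrite /comp /coord_restr.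
under eq_fun do rewrite tnth_mktuple.
by case: (own i \in A); [exact: measurable_tnth | exact: measurable_cst].
Qed.

Lemma measurable_coord_restr_preimage (A : {set I}) (C : set (n.-tuple R)) :
  measurable C -> measurable (coord_restr own A @^-1` C).
Proof.
by move=> mC; rewrite -[X in measurable X]setTI; exact: measurable_coord_restr.
Qed.

Lemma tnth_coord_restr (A : {set I}) (x : n.-tuple R) i :
  own i \in A -> tnth (coord_restr own A x) i = tnth x i.
Proof. by move=> Ai; rewrite /coord_restr tnth_mktuple Ai. Qed.

Lemma coord_restr_sub (A B : {set I}) (x : n.-tuple R) : A \subset B ->
  restr A (restr B x) = restr A x.
Proof.
move=> /fintype.subsetP AB; apply: eq_from_tnth => i.
rewrite /coord_restr !tnth_mktuple.
by case: ifP => // /AB ->.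
Qed.

Lemma coord_restr_comp (A B : {set I}) : A \subset B ->
  restr A \o restr B = restr A.
Proof. by move=> AB; apply/funext => x; exact: coord_restr_sub. Qed.

Lemma measurable_tnth_eq (i : 'I_n) (r : R) :
  measurable [set x : n.-tuple R | tnth x i = r].
Proof.
rewrite -[X in measurable X]setTI.
exact: (measurable_tnth i measurableT (measurable_set1 r)).
Qed.

End coord_restr.
Arguments measurable_coord_restr {R I n} own A.
Arguments measurable_coord_restr_preimage {R I n} own A {C}.
Arguments tnth_coord_restr {R I n} own {A} x {i}.
Arguments coord_restr_sub {R I n} own {A B} x.
Arguments coord_restr_comp {R I n} own {A B}.
Arguments measurable_tnth_eq {R n} i r.

(* [condP] and [pushforward] are measures only under a measurability side
   condition; these copies carry the proof so that they can bear a measure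
   instance. *)
Definition condPm d (T : measurableType d) (R : realType)
  (P : {measure set T -> \bar R}) (C : set T) (mC : measurable C) :=
  condP P C.
Arguments condPm {d T R} P {C} mC.

Definition mpushforward d1 d2 (T1 : measurableType d1)
  (T2 : measurableType d2) (R : realType) (mu : {measure set T1 -> \bar R})
  (f : T1 -> T2) (mf : measurable_fun setT f) :=
  pushforward mu f.
Arguments mpushforward {d1 d2 T1 T2 R} mu {f} mf.

Section condPm_measure.
Context d (T : measurableType d) (R : realType).
Variables (P : {measure set T -> \bar R}) (C : set T) (mC : measurable C).
Local Open Scope ereal_scope.

Let inv_fine_ge0 : (0 <= (fine (P C))^-1)%R.
Proof. by rewrite invr_ge0 fine_ge0 // measure_ge0. Qed.

Lemma condPmE : condPm P mC = mscale (NngNum inv_fine_ge0) (mrestr P mC).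
Proof. by apply/funext => A; rewrite /condPm /condP /mscale /mrestr muleC. Qed.

Let condPm0 : condPm P mC set0 = 0.
Proof. by rewrite condPmE measure0. Qed.

Let condPm_ge0 A : 0 <= condPm P mC A.
Proof. by rewrite condPmE measure_ge0. Qed.

Let condPm_sigma_additive : semi_sigma_additive (condPm P mC).
Proof. by rewrite condPmE; exact: measure_semi_sigma_additive. Qed.

HB.instance Definition _ := isMeasure.Build _ _ _ (condPm P mC)
  condPm0 condPm_ge0 condPm_sigma_additive.

End condPm_measure.

Section mpushforward_measure.
Context d1 d2 (T1 : measurableType d1) (T2 : measurableType d2) (R : realType).
Variables (mu : {measure set T1 -> \bar R}) (f : T1 -> T2).
Variable mf : measurable_fun setT f.
Local Open Scope ereal_scope.

Let mpushforward0 : mpushforward mu mf set0 = 0.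
Proof. by rewrite /mpushforward /pushforward preimage_set0 measure0. Qed.

Let mpushforward_ge0 A : 0 <= mpushforward mu mf A.
Proof. exact: (measure_ge0 mu). Qed.

Let mpushforward_sigma_additive : semi_sigma_additive (mpushforward mu mf).
Proof.
move=> F mF tF mUF; rewrite /mpushforward /pushforward preimage_bigcup.
apply: measure_semi_sigma_additive.
- by move=> k; rewrite -[X in measurable X]setTI; exact: mf.
- apply/trivIsetP => /= i j _ _ ij; rewrite -preimage_setI.
  by move/trivIsetP : tF => /(_ _ _ _ _ ij) ->//; rewrite preimage_set0.
- by rewrite -preimage_bigcup -[X in measurable X]setTI; exact: mf.
Qed.

HB.instance Definition _ := isMeasure.Build _ _ _ (mpushforward mu mf)
  mpushforward0 mpushforward_ge0 mpushforward_sigma_additive.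

End mpushforward_measure.

Section Pdo_measure.
Context (R : realType) (V : finType) (N : nat) (own : 'I_N -> V) (p : nat).
Variable M : SCM R V N own p.

Lemma measurable_scm_sol d th :
  measurable_fun [set: (nE M).-tuple R] (scm_sol M d th).
Proof.
rewrite /scm_sol; elim: #|V| => [|k IH] /=; first exact: measurable_cst.
have -> : (fun e => F M (iter k (fun x => F M x d th e) (zero_tuple R N)) d th e)
  = (fun xe => F M xe.1 d th xe.2) \o
    (fun e => (iter k (fun x => F M x d th e) (zero_tuple R N), e)) by [].
by apply: measurableT_comp; [exact: F_meas | exact: measurable_fun_pair].
Qed.

HB.instance Definition _ d th :=
  Measure.copy (Pdo M d th) (mpushforward (PE M) (measurable_scm_sol d th)).

End Pdo_measure.

Section change_of_variables.
Context d1 d2 (T1 : measurableType d1) (T2 : measurableType d2) (R : realType).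
Local Open Scope ereal_scope.

Lemma integral_mpushforward (mu : {measure set T1 -> \bar R}) (g : T1 -> T2)
    (mg : measurable_fun setT g) (f : T2 -> \bar R)
    (mf : measurable_fun setT f) (B : set T2) :
  measurable B ->
  \int[mpushforward mu mg]_(y in B) f y = \int[mu]_(x in g @^-1` B) f (g x).
Proof.
move=> mB; rewrite [LHS]integralE [RHS]integralE /mpushforward.
rewrite (ge0_integral_pushforward mg _ mB) //; last first.
  exact/measurable_funepos/measurable_funTS.
rewrite (ge0_integral_pushforward mg _ mB) //; last first.
  exact/measurable_funeneg/measurable_funTS.
by rewrite -funepos_comp -funeneg_comp.
Qed.

Lemma eq_integral_law (mu1 mu2 : {measure set T1 -> \bar R}) (g : T1 -> T2)
    (mg : measurable_fun setT g) (f : T2 -> \bar R)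
    (mf : measurable_fun setT f) (B : set T2) :
  measurable B ->
  (forall A, measurable A -> mu1 (g @^-1` A) = mu2 (g @^-1` A)) ->
  \int[mu1]_(x in g @^-1` B) f (g x) = \int[mu2]_(x in g @^-1` B) f (g x).
Proof.
move=> mB law.
rewrite -(integral_mpushforward mu1 _ mg _ mf _ mB).
rewrite -(integral_mpushforward mu2 _ mg _ mf _ mB).
by apply: eq_measure_integral => A mA _; exact: law.
Qed.

End change_of_variables.
Arguments integral_mpushforward {d1 d2 T1 T2 R} mu {g} mg {f} mf {B} mB.
Arguments eq_integral_law {d1 d2 T1 T2 R} mu1 mu2 {g} mg {f} mf {B} mB.

Section conditional_expectation.
Context d1 d2 d3 (T1 : measurableType d1) (T2 : measurableType d2)
  (T3 : measurableType d3) (R : realType).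
Local Open Scope ereal_scope.

Lemma is_condexp_unique (mu : {measure set T1 -> \bar R}) (g : T1 -> T2)
    (mg : measurable_fun setT g) (Yf : T1 -> R) (h1 h2 : T2 -> R) :
  \int[mu]_x (Yf x)%:E \is a fin_num ->
  is_condexp mu g Yf h1 -> is_condexp mu g Yf h2 ->
  (pushforward mu g).-negligible [set y | h1 y <> h2 y].
Proof.
move=> Yfin [mh1 hh1] [mh2 hh2].
have mEh1 : measurable_fun setT (EFin \o h1) by exact/measurable_EFinP.
have mEh2 : measurable_fun setT (EFin \o h2) by exact/measurable_EFinP.
have h1_int : (mpushforward mu mg).-integrable setT (EFin \o h1).
  apply/integrableP; split => //; apply/(abse_integralP _ measurableT mEh1).
  rewrite (integral_mpushforward mu mg mEh1 measurableT) -fin_num_abs.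
  by rewrite -hh1 // preimage_setT.
have [|N [mN N0 sN]] := integral_ae_eq measurableT h1_int mEh2.
  move=> E _ mE; rewrite (integral_mpushforward mu mg mEh1 mE).
  rewrite (integral_mpushforward mu mg mEh2 mE).
  by rewrite -hh1 // hh2.
exists N; split => // y /= h12; apply: sN => /=; apply/not_implyP.
by split => // -[].
Qed.

Lemma is_condexp_law (mu1 mu2 : {measure set T1 -> \bar R}) (phi : T1 -> T3)
    (mphi : measurable_fun setT phi) (g : T3 -> T2) (mg : measurable_fun setT g)
    (Yf : T3 -> R) (mYf : measurable_fun setT Yf) (h : T2 -> R) :
  (forall A, measurable A -> mu1 (phi @^-1` A) = mu2 (phi @^-1` A)) ->
  is_condexp mu1 (g \o phi) (Yf \o phi) h ->
  is_condexp mu2 (g \o phi) (Yf \o phi) h.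
Proof.
move=> law [mh hh]; split => // B mB.
have mgB : measurable (g @^-1` B).
  by rewrite -[X in measurable X]setTI; exact: mg.
have mEY : measurable_fun setT (EFin \o Yf) by exact/measurable_EFinP.
have mEhg : measurable_fun setT (EFin \o (h \o g)).
  exact/measurable_EFinP/measurableT_comp.
transitivity (\int[mu1]_(x in (g \o phi) @^-1` B) ((Yf \o phi) x)%:E).
  exact/esym/(eq_integral_law mu1 mu2 mphi mEY mgB law).
rewrite hh //; exact: (eq_integral_law mu1 mu2 mphi mEhg mgB law).
Qed.

Lemma is_condexp_tower (mu : {measure set T1 -> \bar R}) (g : T1 -> T2)
    (Yf : T1 -> R) (h : T2 -> R) (f : T2 -> T3) (mf : measurable_fun setT f)
    (k : T3 -> R) :
  is_condexp mu g Yf h ->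
  is_condexp mu (f \o g) Yf k <-> is_condexp mu (f \o g) (h \o g) k.
Proof.
move=> [_ hh].
have hhf B : measurable B ->
    \int[mu]_(x in (f \o g) @^-1` B) (Yf x)%:E =
    \int[mu]_(x in (f \o g) @^-1` B) ((h \o g) x)%:E.
  move=> mB; apply: (hh (f @^-1` B)).
  by rewrite -[X in measurable X]setTI; exact: mf.
split=> -[mk hk]; split=> // B mB; first by rewrite -hk // hhf.
by rewrite hhf // hk.
Qed.

End conditional_expectation.
Arguments is_condexp_unique {d1 d2 T1 T2 R mu g} mg {Yf h1 h2}.
Arguments is_condexp_law {d1 d2 d3 T1 T2 T3 R} mu1 mu2 {phi} mphi {g} mg {Yf} mYf {h}.
Arguments is_condexp_tower {d1 d2 d3 T1 T2 T3 R mu g Yf h f} mf {k}.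

Section mixture_integral.
Context d1 d2 (T : measurableType d1) (U : measurableType d2) (R : realType).
Local Open Scope ereal_scope.
Import HBNNSimple.

Lemma mixture_integral_nnsfun (mu : {measure set T -> \bar R}) (A : set T)
    (mA : measurable A) (q : T -> {measure set U -> \bar R})
    (mq : forall E, measurable E -> measurable_fun [set: T] (q ^~ E))
    (h : {nnsfun U >-> R}) :
  \int[mu]_(x in A) \int[q x]_y (h y)%:E =
  \sum_(r \in range h) r%:E * \int[mu]_(x in A) q x (h @^-1` [set r]).
Proof.
under eq_integral do rewrite integralT_nnsfun sintegralE.
rewrite ge0_integral_fsum//; last 2 first.
- by move=> r; apply: measurable_funeM; exact: measurable_funTS (mq _ _).
- move=> r x _.
  by apply: (@mulemu_ge0 _ _ _ (q x) r (fun r => h @^-1` [set r])); exact: preimage_nnfun0.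
apply: eq_fsbigr => r _; have [r0|r0] := leP 0%R r.
  by rewrite ge0_integralZl//; exact: measurable_funTS (mq _ _).
rewrite preimage_nnfun0// [LHS]integral0_eq; last by move=> x _; rewrite measure0 mule0.
by rewrite integral0_eq ?mule0// => x _; exact: measure0.
Qed.

Lemma eq_mixture_integral (mu1 mu2 : {measure set T -> \bar R})
    (A1 A2 : set T) (mA1 : measurable A1) (mA2 : measurable A2)
    (q1 q2 : T -> {measure set U -> \bar R})
    (mq1 : forall E, measurable E -> measurable_fun [set: T] (q1 ^~ E))
    (mq2 : forall E, measurable E -> measurable_fun [set: T] (q2 ^~ E)) :
  (forall E, measurable E ->
     \int[mu1]_(x in A1) q1 x E = \int[mu2]_(x in A2) q2 x E) ->
  forall f : U -> \bar R, (forall y, 0 <= f y) -> measurable_fun [set: U] f ->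
  \int[mu1]_(x in A1) \int[q1 x]_y f y = \int[mu2]_(x in A2) \int[q2 x]_y f y.
Proof.
move=> q12 f f0 mf; pose f_ := nnsfun_approx measurableT mf.
have approx (mu : {measure set T -> \bar R}) (A : set T) (mA : measurable A)
    (q : T -> {measure set U -> \bar R})
    (mq : forall E, measurable E -> measurable_fun [set: T] (q ^~ E)) :
    \int[mu]_(x in A) \int[q x]_y f y =
    limn (fun n => \int[mu]_(x in A) \int[q x]_y (f_ n y)%:E).
  transitivity (\int[mu]_(x in A) limn (fun n => \int[q x]_y (f_ n y)%:E)).
    apply: eq_integral => x _; rewrite -monotone_convergence//; last 3 first.
    - by move=> n; exact/measurable_EFinP.
    - by move=> n z _; rewrite lee_fin.
    - by move=> z _ a b ab; rewrite lee_fin; exact/lefP/nd_nnsfun_approx.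
    by apply: eq_integral => z _; apply/esym/cvg_lim => //; exact: cvg_nnsfun_approx.
  rewrite monotone_convergence//.
  - move=> n; apply: measurable_funTS; apply: measurable_fun_integral_kernel => //.
    + by move=> z; rewrite lee_fin.
    + exact/measurable_EFinP.
  - by move=> n x _; apply: integral_ge0 => // z _; rewrite lee_fin.
  - move=> x _ a b ab; apply: ge0_le_integral => //.
    + by move=> z _; rewrite lee_fin.
    + exact/measurable_EFinP.
    + exact/measurable_EFinP.
    + by move=> z _; rewrite lee_fin; exact/lefP/nd_nnsfun_approx.
rewrite (approx _ _ mA1 _ mq1) (approx _ _ mA2 _ mq2); congr (limn _).
apply/funext => n; rewrite !mixture_integral_nnsfun//.
by apply: eq_fsbigr => r _; rewrite q12.
Qed.

Lemma measurable_dirac_comp (f : T -> U) (E : set U) :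
  measurable_fun setT f -> measurable E ->
  measurable_fun [set: T] (fun x => (\d_(f x) E : \bar R)).
Proof.
move=> mf mE; under eq_fun do rewrite diracE -indicE.
apply/measurable_EFinP/measurable_indic.
by rewrite -[X in measurable X]setTI; exact: mf.
Qed.

Lemma integral_dirac_comp (mu : {measure set T -> \bar R}) (f : T -> U)
    (A : set T) (E : set U) :
  measurable_fun setT f -> measurable A -> measurable E ->
  \int[mu]_(x in A) \d_(f x) E = mu (A `&` f @^-1` E).
Proof.
move=> mf mA mE; under eq_integral do rewrite diracE -indicE.
have mfE : measurable (f @^-1` E).
  by rewrite -[X in measurable X]setTI; exact: mf.
by rewrite integral_indic// setIC.
Qed.

End mixture_integral.
Arguments eq_mixture_integral {d1 d2 T U R mu1 mu2 A1 A2} mA1 mA2 {q1 q2} mq1 mq2.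
Arguments measurable_dirac_comp {d1 d2 T U R f E}.
Arguments integral_dirac_comp {d1 d2 T U R} mu {f A E}.

Section restricted_integral.
Context d (T : measurableType d) (R : realType).
Local Open Scope ereal_scope.

Lemma integral_mrestr (P : {measure set T -> \bar R}) (C D : set T)
    (mC : measurable C) (mD : measurable D) (f : T -> \bar R) :
  (forall x, 0 <= f x) -> measurable_fun setT f ->
  \int[mrestr P mC]_(x in D) f x = \int[P]_(x in D `&` C) f x.
Proof.
move=> f0 mf; have mid : measurable_fun setT (@id T) by exact: measurable_id.
have integral_dirac_id (mu : {measure set T -> \bar R}) A :
    \int[mu]_(x in A) \int[\d_x]_y f y = \int[mu]_(x in A) f x.
  by apply: eq_integral => x _; rewrite integral_dirac// diracT mul1e.
rewrite -(integral_dirac_id (mrestr P mC)) -(integral_dirac_id P).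
apply: (eq_mixture_integral mD (measurableI _ _ mD mC)
  (fun E mE => measurable_dirac_comp (f := id) mid mE)
  (fun E mE => measurable_dirac_comp (f := id) mid mE)) => // E mE.
rewrite (integral_dirac_comp _ (f := id)) // (integral_dirac_comp _ (f := id)) //.
  by rewrite /mrestr setIAC.
exact: measurableI.
Qed.

Lemma integral_condPm (P : {measure set T -> \bar R}) (C D : set T)
    (mC : measurable C) (mD : measurable D) (f : T -> \bar R) :
  (forall x, 0 <= f x) -> measurable_fun setT f ->
  \int[condPm P mC]_(x in D) f x =
  ((fine (P C))^-1)%:E * \int[P]_(x in D `&` C) f x.
Proof.
move=> f0 mf; rewrite condPmE ge0_integral_mscale//; last exact: measurable_funTS.
by rewrite integral_mrestr.
Qed.

End restricted_integral.

Section kernel_mean.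
Context d (T : measurableType d) (R : realType).
Local Open Scope ereal_scope.
Variable q : T -> {measure set R -> \bar R}.

(* Junk (through [fine]) where [q x] has no finite mean. *)
Definition kernel_mean x : R :=
  (fine (\int[q x]_y (EFin^\+) y) - fine (\int[q x]_y (EFin^\-) y))%R.

Hypothesis mq : forall E, measurable E -> measurable_fun [set: T] (q ^~ E).

Lemma measurable_kernel_mean : measurable_fun setT kernel_mean.
Proof.
apply: measurable_funB;
  apply: measurableT_comp (@fine_measurable R setT measurableT) _;
  apply: (@measurable_fun_integral_kernel _ _ _ _ _ q mq).
- by move=> y; exact: funepos_ge0.
- by apply: measurable_funepos; exact: EFin_measurable.
- by move=> y; exact: funeneg_ge0.
- by apply: measurable_funeneg; exact: EFin_measurable.
Qed.

Variables (nu : {measure set T -> \bar R}) (A : set T) (Yf : T -> R).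
Hypotheses (mA : measurable A) (mYf : measurable_fun setT Yf).
Hypothesis disintegration :
  forall E, measurable E -> nu (A `&` Yf @^-1` E) = \int[nu]_(x in A) q x E.

Lemma ge0_integral_disintegration (f : R -> \bar R) :
  (forall y, 0 <= f y) -> measurable_fun setT f ->
  \int[nu]_(x in A) f (Yf x) = \int[nu]_(x in A) \int[q x]_y f y.
Proof.
move=> f0 mf.
transitivity (\int[nu]_(x in A) \int[\d_(Yf x)]_y f y).
  by apply: eq_integral => x _; rewrite integral_dirac// diracT mul1e.
apply: (eq_mixture_integral mA mA
  (fun E mE => measurable_dirac_comp mYf mE) mq) => // E mE.
by rewrite integral_dirac_comp// disintegration.
Qed.

Lemma integral_fine_kernel (f : R -> \bar R) :
  (forall y, 0 <= f y) -> measurable_fun setT f ->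
  \int[nu]_(x in A) f (Yf x) < +oo ->
  nu.-integrable A (fun x => (fine (\int[q x]_y f y))%:E) /\
  \int[nu]_(x in A) (fine (\int[q x]_y f y))%:E = \int[nu]_(x in A) f (Yf x).
Proof.
move=> f0 mf flt; set phi := fun x => \int[q x]_y f y.
have ephi := ge0_integral_disintegration _ f0 mf.
have mphi : measurable_fun setT phi by exact: measurable_fun_integral_kernel.
have phi0 x : 0 <= phi x by apply: integral_ge0.
have phi_int : nu.-integrable A phi.
  apply/integrableP; split; first exact: measurable_funTS.
  by under eq_integral do rewrite gee0_abs//; rewrite -ephi.
have mfine_phi : measurable_fun setT (EFin \o fine \o phi).
  by apply/measurable_EFinP; exact: measurableT_comp.
have fine_phi : \int[nu]_(x in A) (fine (phi x))%:E = \int[nu]_(x in A) phi x.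
  apply: ae_eq_integral => //; [exact: measurable_funTS|exact: measurable_funTS|].
  apply: filterS (integrable_ae mA phi_int) => x + Ax => /(_ Ax) phix.
  by rewrite /= fineK.
split; last by rewrite fine_phi ephi.
apply/integrableP; split; first exact: measurable_funTS.
have fine_phi0 x : 0 <= (fine (phi x))%:E by rewrite lee_fin fine_ge0.
under eq_integral do rewrite gee0_abs ?fine_phi0//.
by rewrite fine_phi -ephi.
Qed.

Lemma integral_disintegration : nu.-integrable A (EFin \o Yf) ->
  \int[nu]_(x in A) (Yf x)%:E = \int[nu]_(x in A) (kernel_mean x)%:E.
Proof.
move=> Yint.
have pos_lt : \int[nu]_(x in A) EFin^\+ (Yf x) < +oo.
  by have := integral_funepos_lt_pinfty mA Yint; rewrite funepos_comp.
have neg_lt : \int[nu]_(x in A) EFin^\- (Yf x) < +oo.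
  by have := integral_funeneg_lt_pinfty mA Yint; rewrite funeneg_comp.
have [pos_int pos_eq] :=
  integral_fine_kernel _ (fun y => funepos_ge0 _ y)
    (measurable_funepos (@EFin_measurable R setT)) pos_lt.
have [neg_int neg_eq] :=
  integral_fine_kernel _ (fun y => funeneg_ge0 _ y)
    (measurable_funeneg (@EFin_measurable R setT)) neg_lt.
under [RHS]eq_integral do rewrite EFinB.
rewrite integralB// pos_eq neg_eq [LHS]integralE.
by rewrite funepos_comp funeneg_comp.
Qed.

End kernel_mean.
Arguments kernel_mean {d T R} q x.
Arguments measurable_kernel_mean {d T R q} mq.
Arguments integral_disintegration {d T R q} mq {nu A Yf} mA mYf.

Section transport.
Context (R : realType) (V : finType) (N : nat) (own : 'I_N -> V) (p : nat).
Variables (vX vS : V) (Z : {set V}) (iY iS : 'I_N).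
Hypothesis own_iS : own iS = vS.
Local Open Scope ereal_scope.
Local Notation T := (N.-tuple R).
Local Notation XZ := (vX |: Z).
Local Notation XZS := ((vX |: Z) :|: [set vS]).
Local Notation Y := (fun x : T => tnth x iY).
Local Notation S1 := [set x : T | tnth x iS = 1%R].

Let mS1 : measurable S1 := measurable_tnth_eq iS 1%R.
Let mY : measurable_fun setT Y := measurable_tnth iY.

Variables (M : SCM R V N own p) (Q : R.-pker T ~> R).
(* [trans_CI M Y [set vS] XZ], with its kernel named. *)
Hypothesis Q_disintegrates : forall d th (C : set T) (E : set R),
  measurable C -> measurable E ->
  Pdo M d th (vals own XZS @^-1` C `&` Y @^-1` E) =
  \int[Pdo M d th]_(x in vals own XZS @^-1` C) Q (vals own XZ x) E.

Let mQ E : measurable E -> measurable_fun [set: T] (fun x => Q (vals own XZ x) E).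
Proof.
move=> mE.
exact: measurableT_comp (measurable_kernel Q E mE) (measurable_coord_restr own XZ).
Qed.

Let preimage_XZ (C : set T) :
  vals own XZ @^-1` C = vals own XZS @^-1` (vals own XZ @^-1` C).
Proof. by rewrite -comp_preimage (coord_restr_comp own (finset.subsetUl _ _)). Qed.

Lemma integral_kernel_mean_do d th (C : set T) : measurable C ->
  (Pdo M d th).-integrable setT (EFin \o Y) ->
  \int[Pdo M d th]_(x in vals own XZ @^-1` C) (Y x)%:E =
  \int[Pdo M d th]_(x in vals own XZ @^-1` C) (kernel_mean Q (vals own XZ x))%:E.
Proof.
move=> mC Yint.
have mXZC := measurable_coord_restr_preimage own XZ mC.
apply: (integral_disintegration mQ mXZC mY).
- by move=> E mE; rewrite preimage_XZ; exact: Q_disintegrates.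
- exact: integrableS Yint.
Qed.

Lemma condP_S1_disintegration d th (C : set T) (E : set R) :
  measurable C -> measurable E ->
  condPm (Pdo M d th) mS1 (vals own XZ @^-1` C `&` Y @^-1` E) =
  \int[condPm (Pdo M d th) mS1]_(x in vals own XZ @^-1` C) Q (vals own XZ x) E.
Proof.
move=> mC mE; have mXZC := measurable_coord_restr_preimage own XZ mC.
rewrite integral_condPm//; last exact: mQ.
rewrite /condPm /condP muleC; congr (_ * _).
have S1_XZS : vals own XZS @^-1` S1 = S1.
  apply/seteqP; split => x;
    by rewrite /preimage /= tnth_coord_restr// own_iS !inE eqxx orbT.
rewrite setIAC (preimage_XZ C) -S1_XZS -!preimage_setI.
exact: Q_disintegrates (measurableI _ _ mXZC mS1) mE.
Qed.

Lemma is_condexp_kernel_mean_S1 d th :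
  (condP (Pdo M d th) S1).-integrable setT (EFin \o Y) ->
  is_condexp (condP (Pdo M d th) S1) (vals own XZ) Y (kernel_mean Q).
Proof.
move=> Yint; split; first exact: measurable_kernel_mean (measurable_kernel Q).
move=> C mC; have mXZC := measurable_coord_restr_preimage own XZ mC.
apply: (integral_disintegration (nu := condPm (Pdo M d th) mS1) mQ mXZC mY).
- by move=> E mE; exact: condP_S1_disintegration.
- exact: (integrableS (mu := condPm (Pdo M d th) mS1) measurableT mXZC (subsetT _) Yint).
Qed.

Lemma is_condexp_do_of_S1 d th d' th' :
  (Pdo M d th).-integrable setT (EFin \o Y) ->
  (condP (Pdo M d' th') S1).-integrable setT (EFin \o Y) ->
  (forall A, measurable A ->
     pushforward (condP (Pdo M d' th') S1) (vals own XZ) A = 0 ->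
     pushforward (Pdo M d th) (vals own XZ) A = 0) ->
  forall h, is_condexp (condP (Pdo M d' th') S1) (vals own XZ) Y h ->
  is_condexp (Pdo M d th) (vals own XZ) Y h.
Proof.
move=> Yint Yint' abs_cont h hh; have [mh _] := hh.
have [K [mK K0 hK]] :
    (pushforward (condP (Pdo M d' th') S1) (vals own XZ)).-negligible
      [set z | kernel_mean Q z <> h z].
  apply: (is_condexp_unique (mu := condPm (Pdo M d' th') mS1)
    (measurable_coord_restr own XZ) _ (is_condexp_kernel_mean_S1 _ _ Yint') hh).
  exact: (integrable_fin_num (mu := condPm (Pdo M d' th') mS1) measurableT Yint').
split => // C mC; rewrite integral_kernel_mean_do//.
have mXZC := measurable_coord_restr_preimage own XZ mC.
apply: ae_eq_integral => //.
- apply: measurable_funTS; apply/measurable_EFinP.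
  exact: measurableT_comp (measurable_kernel_mean (measurable_kernel Q))
    (measurable_coord_restr own XZ).
- apply: measurable_funTS; apply/measurable_EFinP.
  exact: measurableT_comp mh (measurable_coord_restr own XZ).
exists (vals own XZ @^-1` K); split.
- exact: measurable_coord_restr_preimage.
- exact: abs_cont.
- by move=> x /= hx; apply: hK => /= eqx; apply: hx => _; rewrite eqx.
Qed.

Lemma is_condexp_X_do d th d' th' :
  (Pdo M d th).-integrable setT (EFin \o Y) ->
  (condP (Pdo M d' th') S1).-integrable setT (EFin \o Y) ->
  (forall A, measurable A ->
     pushforward (condP (Pdo M d' th') S1) (vals own XZ) A = 0 ->
     pushforward (Pdo M d th) (vals own XZ) A = 0) ->
  forall h, is_condexp (condP (Pdo M d' th') S1) (vals own XZ) Y h ->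
  forall k, is_condexp (Pdo M d th) (vals own [set vX]) Y k <->
            is_condexp (Pdo M d th) (vals own [set vX]) (h \o vals own XZ) k.
Proof.
move=> Yint Yint' abs_cont h hh k.
have X_XZ : vals own [set vX] \o vals own XZ = vals own [set vX] :> (T -> T).
  by apply: coord_restr_comp; rewrite finset.sub1set finset.setU11.
rewrite -X_XZ; apply: (is_condexp_tower (measurable_coord_restr own [set vX])).
exact: (is_condexp_do_of_S1 _ _ _ _ Yint Yint' abs_cont _ hh).
Qed.

End transport.
Arguments is_condexp_kernel_mean_S1 {R V N own p vX vS Z iY iS} own_iS {M Q}
  Q_disintegrates {d th}.
Arguments is_condexp_X_do {R V N own p vX vS Z iY iS} own_iS {M Q}
  Q_disintegrates {d th d' th'} Yint Yint' abs_cont {h} hh {k}.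

Theorem mainTheorem5
  (R : realType) (V : finType) (N : nat) (own : 'I_N -> V) (p : nat)
  (vX vYh vY vS : V) (Z : {set V}) (iY iS : 'I_N)
  (d d' : bool) (th th' : p.-tuple R) :
  uniq [:: vX; vYh; vY] ->
  (* Y is real-valued: it consists of the single coordinate iY *)
  own iY = vY -> (forall i, own i = vY -> i = iY) ->
  (* S is one-dimensional: the single coordinate iS *)
  own iS = vS -> (forall i, own i = vS -> i = iS) ->
  let Y : N.-tuple R -> R := fun x => tnth x iY in
  let S1 : set (N.-tuple R) := [set x | tnth x iS = 1] in
  let XZ := vX |: Z in
  let XYZ := vX |: (vY |: Z) in
  (* P(X, Z | do(D=d, Theta=th)) *)
  let PXZ_do (M : SCM R V N own p) := pushforward (Pdo M d th) (vals own XZ) in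
  (* P(X, Z | S = 1, do(D=d', Theta=th')) *)
  let PXZ_S1 (M : SCM R V N own p) := pushforward (condP (Pdo M d' th') S1) (vals own XZ) in
  (* P(X, Y, Z | S = 1, do(D=d', Theta=th')) *)
  let PXYZ_S1 (M : SCM R V N own p) := pushforward (condP (Pdo M d' th') S1) (vals own XYZ) in
  (* P(X | do(D=d, Theta=th)) *)
  let PX_do (M : SCM R V N own p) := pushforward (Pdo M d th) (vals own [set vX]) in
  let Hyp (M : SCM R V N own p) :=
    [/\ in_classM M vX vYh vY,
        (forall d0 th0 e, tnth (scm_sol M d0 th0 e) iS = 0 \/
                          tnth (scm_sol M d0 th0 e) iS = 1),
        (* Y _||_ {D, Theta, S} | X, Z  (transitional) *)
        trans_CI M Y [set vS] XZ,
        (* P(X,Z | do(d,th)) << P(X,Z | S=1, do(d',th')) *)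
        (forall A, measurable A -> PXZ_S1 M A = 0%E -> PXZ_do M A = 0%E)
      & (* the conditioning and the expectations are well defined *)
        [/\ (0 < Pdo M d' th' S1)%E,
            (Pdo M d th).-integrable [set: N.-tuple R] (fun x => (Y x)%:E)
          & (condP (Pdo M d' th') S1).-integrable [set: N.-tuple R]
              (fun x => (Y x)%:E)]] in
  (* identifiability of E[Y | X, do(d,th)] from
     {P(X,Y,Z | S=1, do(d',th')), P(X,Z | do(d,th))} *)
  (forall M1 M2 : SCM R V N own p, Hyp M1 -> Hyp M2 ->
     (forall A, measurable A ->
        PXYZ_S1 M1 A = PXYZ_S1 M2 A /\ PXZ_do M1 A = PXZ_do M2 A) ->
     forall g1 g2,
       is_condexp (Pdo M1 d th) (vals own [set vX]) Y g1 ->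
       is_condexp (Pdo M2 d th) (vals own [set vX]) Y g2 ->
       (PX_do M1).-negligible [set x | g1 x <> g2 x]) /\
  (* E[Y | X, do(d,th)] = E[ E[Y | X, Z, S=1] | X, do(d,th)]
     P(X | do(d,th))-a.e. *)
  (forall M : SCM R V N own p, Hyp M ->
     forall g h k,
       is_condexp (Pdo M d th) (vals own [set vX]) Y g ->
       is_condexp (condP (Pdo M d' th') S1) (vals own XZ) Y h ->
       is_condexp (Pdo M d th) (vals own [set vX])
                  (fun x => h (vals own XZ x)) k ->
       (PX_do M).-negligible [set x | g x <> k x]).

Proof.
move=> _ own_iY _ own_iS _ Y S1 XZ XYZ PXZ_do PXZ_S1 PXYZ_S1 PX_do Hyp.
have mS1 : measurable S1 := measurable_tnth_eq iS 1%R.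
have mY : measurable_fun setT Y := measurable_tnth iY.
have mX := @measurable_coord_restr R _ _ own [set vX].
have mXZ := @measurable_coord_restr R _ _ own XZ.
have X_XZ : vals own [set vX] \o vals own XZ = vals own [set vX]
    :> (N.-tuple R -> N.-tuple R).
  by apply: coord_restr_comp; rewrite finset.sub1set finset.setU11.
have XZ_XYZ : vals own XZ \o vals own XYZ = vals own XZ
    :> (N.-tuple R -> N.-tuple R).
  by apply: coord_restr_comp; rewrite finset.setUS// finset.subsetUr.
have Y_XYZ : Y \o vals own XYZ = Y.
  by apply/funext => x; rewrite /Y /= tnth_coord_restr// own_iY !inE eqxx orbT.
split.
  move=> M1 M2 [_ _ [Q1 HQ1] ac1 [_ Yint1 Yint1']]
    [_ _ [Q2 HQ2] ac2 [_ Yint2 Yint2']] same g1 g2 hg1 hg2.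
  pose h := kernel_mean Q1.
  have h_S1_1 := is_condexp_kernel_mean_S1 own_iS HQ1 Yint1'.
  have h_S1_2 : is_condexp (condP (Pdo M2 d' th') S1) (vals own XZ) Y h.
    rewrite -XZ_XYZ -Y_XYZ.
    apply: (is_condexp_law (condPm (Pdo M1 d' th') mS1)
      (condPm (Pdo M2 d' th') mS1) (measurable_coord_restr own XYZ) mXZ mY).
      by move=> A mA; exact: (same A mA).1.
    by rewrite XZ_XYZ Y_XYZ.
  have hg2_1 : is_condexp (Pdo M1 d th) (vals own [set vX]) Y g2.
    apply/(is_condexp_X_do own_iS HQ1 Yint1 Yint1' ac1 h_S1_1); rewrite -X_XZ.
    apply: (is_condexp_law (Pdo M2 d th) (Pdo M1 d th) mXZ mX
      (measurable_kernel_mean (measurable_kernel Q1))).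
      by move=> A mA; exact/esym/(same A mA).2.
    by rewrite X_XZ; apply/(is_condexp_X_do own_iS HQ2 Yint2 Yint2' ac2 h_S1_2).
  apply: (is_condexp_unique mX _ hg1 hg2_1).
  exact: (integrable_fin_num (mu := Pdo M1 d th) measurableT Yint1).
move=> M [_ _ [Q HQ] ac [_ Yint Yint']] g h k hg hh hk.
apply: (is_condexp_unique mX _ hg).
  exact: (integrable_fin_num (mu := Pdo M d th) measurableT Yint).
exact/(is_condexp_X_do own_iS HQ Yint Yint' ac hh).
Qed.
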